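(* Let $n\ge6$ and let $\mathfrak g$ be an $n$-dimensional filiform Lie algebra with associated triple $(n-2,n-2,n)$. Then $$\mathrm{HP}_{\mathfrak g}(t,s)=\mathrm{HP}^{(0)}_{\mathfrak g}(t,s)+t^2s^3+t^3s^2+t^2s^2.$$
   Context: All Lie algebras are over $\mathbb C$; $C^1\mathfrak g=\mathfrak g$, $C^k\mathfrak g=[C^{k-1}\mathfrak g,\mathfrak g]$. A Lie algebra is filiform if $\dim\mathfrak g=n\ge2$ and $\dim C^k\mathfrak g=n-k$ for $2\le k\le n$. An adapted basis of a filiform $\mathfrak g$ is a basis $\{e_1,\dots,e_n\}$ with $[e_1,e_h]=e_{h-1}$ ($3\le h\le n$), $[e_2,e_h]=0$ ($1\le h\le n$), $[e_3,e_h]=0$ ($2\le h\le n$). For non-model filiform $\mathfrak g$, $z_1=\min\{k\ge4:[e_k,e_n]\ne0\}$, $z_2=\min\{k\ge4:[e_k,e_{k+1}]\ne0\}$ (in any adapted basis) are isomorphism invariants; $(z_1,z_2,n)$ is the associated triple. The Hilbert polynomial is $\mathrm{HP}_{\mathfrak g}(t,s)=\sum_{k,\ell\ge1}\dim[C^k\mathfrak g,C^\ell\mathfrak g]\,t^ks^\ell$, and for filiform $\mathfrak g$ of dimension $n$, $\mathrm{HP}^{(0)}_{\mathfrak g}(t,s)=(n-2)ts+\sum_{2\le k\le n-2}(n-k-1)(t^ks+ts^k)$ (the part of $\mathrm{HP}_{\mathfrak g}$ with $k=1$ or $\ell=1$). *)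

From HB Require Import structures.
From mathcomp Require Import all_boot all_order all_algebra.
From mathcomp Require Import reals complex.
Set Implicit Arguments. Unset Strict Implicit. Unset Printing Implicit Defensive.
Import Order.TTheory GRing.Theory Num.Theory.
Local Open Scope ring_scope.

Section Lie.
Variable (F : fieldType) (V : vectType F) (br : V -> V -> V).

Definition is_lie : Prop :=
  [/\ (forall (a : F) (x y z : V), br (a *: x + y) z = a *: br x z + br y z),
      (forall (a : F) (x y z : V), br z (a *: x + y) = a *: br z x + br z y),
      (forall x : V, br x x = 0) &
      (forall x y z : V, br x (br y z) + br y (br z x) + br z (br x y) = 0)].

(* [A, B] : the subspace spanned by all brackets [a, b], a in A, b in B
   (by bilinearity, spanned by brackets of basis vectors). *)
Definition brS (A B : {vspace V}) : {vspace V} :=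
  (<<[seq br a b | a <- vbasis A, b <- vbasis B]>>)%VS.

(* Lower central series, C^1 = g, C^k = [C^(k-1), g]; C^0 := g by convention. *)
Fixpoint LCS (k : nat) : {vspace V} :=
  match k with
  | 0 => fullv
  | 1 => fullv
  | k'.+1 => brS (LCS k') fullv
  end.

Definition filiform : Prop :=
  (2 <= \dim {:V})%N /\
  forall k, (2 <= k <= \dim {:V})%N -> \dim (LCS k) = (\dim {:V} - k)%N.

(* A basis e_1, ..., e_n (1-based indexing, e : nat -> V). *)
Definition is_basis (e : nat -> V) : Prop :=
  basis_of fullv [seq e i | i <- iota 1 (\dim {:V})].

Definition adapted (e : nat -> V) : Prop :=
  let n := \dim {:V} in
  [/\ is_basis e,
      (forall h, (3 <= h <= n)%N -> br (e 1%N) (e h) = e h.-1),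
      (forall h, (1 <= h <= n)%N -> br (e 2%N) (e h) = 0) &
      (forall h, (2 <= h <= n)%N -> br (e 3%N) (e h) = 0)].

Definition is_model : Prop :=
  let n := \dim {:V} in
  exists e : nat -> V,
  [/\ is_basis e,
      (forall h, (3 <= h <= n)%N -> br (e 1%N) (e h) = e h.-1),
      br (e 1%N) (e 2%N) = 0 &
      (forall i j, (2 <= i <= n)%N -> (2 <= j <= n)%N -> br (e i) (e j) = 0)].

Definition is_min_from4 (P : nat -> Prop) (m : nat) : Prop :=
  [/\ (4 <= m)%N, P m & forall k, (4 <= k < m)%N -> ~ P k].

Definition z1_is (e : nat -> V) (m : nat) : Prop :=
  is_min_from4 (fun k => br (e k) (e (\dim {:V})) <> 0) m.

Definition z2_is (e : nat -> V) (m : nat) : Prop :=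
  is_min_from4 (fun k => br (e k) (e k.+1) <> 0) m.

(* Associated triple (z1, z2, n) of a non-model filiform algebra, computed in an
   adapted basis (it is independent of the adapted basis). *)
Definition assoc_triple (a b n : nat) : Prop :=
  [/\ filiform, ~ is_model, \dim {:V} = n &
      exists e, [/\ adapted e, z1_is e a & z2_is e b]].

End Lie.

(* Bivariate integer polynomials in t, s: {poly {poly int}}, outer variable t,
   inner variable s.  tm k l = t^k s^l. *)
Definition tm (k l : nat) : {poly {poly int}} := ('X^l)%:P * 'X^k.

(* Hilbert polynomial: sum over k, l >= 1 of dim [C^k, C^l] t^k s^l.
   The sum is truncated at k, l <= dim g; for nilpotent (e.g. filiform) g
   C^k = 0 for k >= dim g, so nothing is lost. *)
Definition HP (F : fieldType) (V : vectType F) (br : V -> V -> V) :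
    {poly {poly int}} :=
  \sum_(1 <= k < (\dim {:V}).+1) \sum_(1 <= l < (\dim {:V}).+1)
     (\dim (brS br (LCS br k) (LCS br l)))%:R * tm k l.

Definition HP0 (n : nat) : {poly {poly int}} :=
  (n - 2)%:R * tm 1 1 + \sum_(2 <= k < n - 1) (n - k - 1)%:R * (tm k 1 + tm 1 k).

From HB Require Import structures.
From mathcomp Require Import all_boot all_order all_algebra.
From mathcomp Require Import reals complex.
From mathcomp Require Import zify ring.
Import GRing.Theory.
Local Open Scope ring_scope.

(* In an adapted basis ad e_1 lowers indices, so C^k = <e_2, ..., e_(n-k+1)>
   for k >= 2 and [C^1, C^l] = C^(l+1); these terms make up HP^(0).  Since
   z_1 = n - 2, [e_i, e_n] = 0 for i <= n - 3, and since ad e_1 is a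
   derivation, [e_1, [e_i, e_j]] = [e_(i-1), e_j] + [e_i, e_(j-1)]; descending
   induction on i + j then gives [e_i, e_j] = 0 whenever i + j <= 2n - 4.
   Hence for k, l >= 2 the space [C^k, C^l] is spanned by [e_(n-2), e_(n-1)],
   which is nonzero because z_2 = n - 2, and it lies in [C^k, C^l] exactly
   when k + l <= 5. *)

Section LieBracket.
Context {F : fieldType} {V : vectType F} {br : V -> V -> V}.
Hypothesis lie : is_lie br.

Lemma br0l z : br 0 z = 0.
Proof.
case: lie => brDZl _ _ _; have := brDZl (-1) 0 0 z.
by rewrite scaleN1r oppr0 addr0 => ->; rewrite scaleN1r addNr.
Qed.

Lemma br0r z : br z 0 = 0.
Proof.
case: lie => _ brDZr _ _; have := brDZr (-1) 0 0 z.
by rewrite scaleN1r oppr0 addr0 => ->; rewrite scaleN1r addNr.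
Qed.

Lemma brDl x y z : br (x + y) z = br x z + br y z.
Proof. by case: lie => brDZl _ _ _; rewrite -{1}[x]scale1r brDZl scale1r. Qed.

Lemma brDr x y z : br z (x + y) = br z x + br z y.
Proof. by case: lie => _ brDZr _ _; rewrite -{1}[x]scale1r brDZr scale1r. Qed.

Lemma brZl a x z : br (a *: x) z = a *: br x z.
Proof. by case: lie => brDZl _ _ _; rewrite -[a *: x]addr0 brDZl br0l addr0. Qed.

Lemma brZr a x z : br z (a *: x) = a *: br z x.
Proof. by case: lie => _ brDZr _ _; rewrite -[a *: x]addr0 brDZr br0r addr0. Qed.

Lemma brNr x z : br z (- x) = - br z x.
Proof. by rewrite -scaleN1r brZr scaleN1r. Qed.

Lemma brxx x : br x x = 0.
Proof. by case: lie. Qed.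

Lemma br_anti x y : br x y = - br y x.
Proof.
apply/eqP; rewrite -addr_eq0; have := brxx (x + y).
by rewrite brDl !brDr !brxx add0r addr0 => ->.
Qed.

Lemma br_suml I (r : seq I) (P : pred I) (f : I -> V) z :
  br (\sum_(i <- r | P i) f i) z = \sum_(i <- r | P i) br (f i) z.
Proof. exact: (big_morph (br^~ z) (fun x y => brDl x y z) (br0l z)). Qed.

Lemma br_sumr I (r : seq I) (P : pred I) (f : I -> V) z :
  br z (\sum_(i <- r | P i) f i) = \sum_(i <- r | P i) br z (f i).
Proof. exact: (big_morph (br z) (fun x y => brDr x y z) (br0r z)). Qed.

Lemma mem_br_span {X Y : seq V} {x y : V} :
  x \in <<X>>%VS -> y \in <<Y>>%VS ->
  br x y \in <<[seq br a b | a <- X, b <- Y]>>%VS.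
Proof.
move=> /(coord_span (X := in_tuple X)) -> /(coord_span (X := in_tuple Y)) ->.
rewrite br_suml; apply: memv_suml => i _; rewrite br_sumr; apply: memv_suml => j _.
rewrite brZl brZr !memvZ // memv_span //; apply/allpairsP.
by exists ((in_tuple X)`_i, (in_tuple Y)`_j); rewrite !mem_nth ?size_tuple.
Qed.

Lemma mem_brS {A B : {vspace V}} {x y : V} :
  x \in A -> y \in B -> br x y \in brS br A B.
Proof.
by move=> xA yB; apply: mem_br_span; rewrite (span_basis (vbasisP _)).
Qed.

Lemma brS_subv {A B : {vspace V}} {X Y : seq V} :
  (A <= <<X>>)%VS -> (B <= <<Y>>)%VS ->
  (brS br A B <= <<[seq br a b | a <- X, b <- Y]>>)%VS.
Proof.
move=> /subvP sAX /subvP sBY.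
apply/span_subvP => _ /allpairsP[[a b] /= [aA bB ->]].
by apply: mem_br_span; [apply: sAX | apply: sBY]; apply: vbasis_mem.
Qed.

Lemma brSC (A B : {vspace V}) : brS br A B = brS br B A.
Proof.
suff sub C D : (brS br C D <= brS br D C)%VS by apply: subv_anti; rewrite !sub.
apply/span_subvP => _ /allpairsP[[c d] /= [cC dD ->]].
by rewrite br_anti memvN mem_brS // vbasis_mem.
Qed.

Lemma LCS_succ k : (1 <= k)%N -> LCS br k.+1 = brS br (LCS br k) fullv.
Proof. by case: k. Qed.

End LieBracket.

Section AdaptedBasis.
Context {F : fieldType} {V : vectType F} {br : V -> V -> V}.
Hypothesis lie : is_lie br.
Variables (n : nat) (e : nat -> V).
Hypothesis n_ge6 : (6 <= n)%N.
Hypothesis basis_e : basis_of fullv [seq e i | i <- iota 1 n].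
Hypothesis dim_LCS : forall k, (2 <= k <= n)%N -> \dim (LCS br k) = (n - k)%N.
Hypothesis br_e1 : forall h, (3 <= h <= n)%N -> br (e 1%N) (e h) = e h.-1.
Hypothesis br_e2 : forall h, (1 <= h <= n)%N -> br (e 2%N) (e h) = 0.
Hypothesis br_e3 : forall h, (2 <= h <= n)%N -> br (e 3%N) (e h) = 0.
(* All that is used of the triple (n - 2, n - 2, n). *)
Hypothesis z1_eq : forall k, (4 <= k < n - 2)%N -> br (e k) (e n) = 0.
Hypothesis z2_eq : br (e (n - 2)%N) (e (n - 1)%N) != 0.

Lemma br_e1_leibniz i j : (3 <= i <= n)%N -> (3 <= j <= n)%N ->
  br (e 1%N) (br (e i) (e j)) = br (e i.-1) (e j) + br (e i) (e j.-1).
Proof.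
move=> Hi Hj; case: (lie) => _ _ _ /(_ (e 1%N) (e i) (e j)).
rewrite (br_anti lie (e j) (e 1%N)) br_e1 // (brNr lie) br_e1 //.
rewrite (br_anti lie (e j)) -addrA -opprD => /eqP; rewrite subr_eq0 => /eqP->.
by rewrite addrC.
Qed.

Lemma br_e_last i : (2 <= i <= n - 3)%N -> br (e i) (e n) = 0.
Proof.
move=> Hi; case: (ltngtP i 3) => [lt_i3|gt_i3|->].
- have -> : i = 2%N by lia.
  by apply: br_e2; lia.
- by apply: z1_eq; lia.
- by apply: br_e3; lia.
Qed.

Definition vanishes_at s := forall i j, (2 <= i <= n)%N -> (2 <= j <= n)%N ->
  (i + j = s)%N -> br (e i) (e j) = 0.

Lemma vanishes_at_top : vanishes_at (2 * n - 4).
Proof.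
move=> i j; wlog le_ij : i j / (i <= j)%N => [sym|] Hi Hj Hs.
  have [le|/ltnW le_ji] := leqP i j; first exact: sym.
  by rewrite (br_anti lie) sym ?oppr0 // addnC.
have [Ej|[[-> ->]|->]] : (j = n \/ i = n - 3 /\ j = n - 1 \/ j = i)%N by lia.
- by rewrite Ej; apply: br_e_last; lia.
- have := br_e1_leibniz (n - 3)%N n ltac:(lia) ltac:(lia).
  rewrite !br_e_last ?(br0r lie) ?add0r; try lia.
  by have -> : (n - 1 = n.-1)%N by lia.
- exact: (brxx lie).
Qed.

Lemma vanishes_at_pred s :
  (s < 2 * n - 4)%N -> vanishes_at s.+1 -> vanishes_at s.
Proof.
move=> lt_s vanish_s1 i; elim: i => [|i IH] j Hi Hj Hs; first by lia.
have [Ei|ne_i1] := eqVneq i.+1 2%N; first by rewrite Ei br_e2 //; lia.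
have [Ej|ne_jn] := eqVneq j n; first by rewrite Ej br_e_last //; lia.
have := br_e1_leibniz i.+1 j.+1 ltac:(lia) ltac:(lia).
by rewrite vanish_s1 ?IH ?(br0r lie) ?add0r //; lia.
Qed.

Lemma br_e_eq0 i j : (2 <= i <= n)%N -> (2 <= j <= n)%N ->
  (i + j <= 2 * n - 4)%N -> br (e i) (e j) = 0.
Proof.
move=> Hi Hj le_ij; suff: vanishes_at (i + j) by apply.
move: (i + j)%N le_ij => s le_s.
have := subnK le_s; move: (2 * n - 4 - s)%N => d.
elim: d s le_s => [|d IH] s le_s Eds.
  by move: Eds; rewrite add0n => ->; apply: vanishes_at_top.
by apply: vanishes_at_pred; [lia | apply: IH; lia].
Qed.

Definition lcs_span k : {vspace V} := <<[seq e i | i <- iota 2 (n - k)]>>%VS.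

Lemma lcs_span0 k : (n <= k)%N -> lcs_span k = 0%VS.
Proof. by move=> le_nk; rewrite /lcs_span (eqP le_nk) span_nil. Qed.

Lemma dim_lcs_span k : (1 <= k)%N -> \dim (lcs_span k) = (n - k)%N.
Proof.
move=> k_ge1; have [le_kn|lt_nk] := leqP k n; last first.
  by rewrite lcs_span0 ?dimv0 //; lia.
have split_iota : iota 1 n = 1%N :: iota 2 (n - k) ++ iota (2 + (n - k)) (k - 1).
  rewrite -iotaD; have -> : (n - k + (k - 1) = n.-1)%N by lia.
  by case: (n) n_ge6.
move: (basis_free basis_e); rewrite split_iota map_cons map_cat free_cons.
by case/andP=> _ /catl_free; rewrite /free size_map size_iota => /eqP.
Qed.

Lemma mem_e_LCS k i : (1 <= k)%N -> (2 <= i <= n - k + 1)%N -> e i \in LCS br k.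
Proof.
elim: k i => [//|k IH] i _ Hi; have [->|k_gt0] := posnP k; first by rewrite memvf.
have -> : e i = - br (e i.+1) (e 1%N) by rewrite -(br_anti lie) br_e1 //; lia.
by rewrite LCS_succ // memvN mem_brS ?memvf // IH //; lia.
Qed.

Lemma LCS_lcs_span k : (2 <= k)%N -> LCS br k = lcs_span k.
Proof.
elim: k => [//|k IH] k_ge1; have [le_kn|lt_nk] := leqP k.+1 n.
  apply/eqP; rewrite eq_sym eqEdim dim_lcs_span // dim_LCS ?leqnn ?andbT; last by lia.
  apply/span_subvP => _ /mapP[i + ->]; rewrite mem_iota => Hi.
  by apply: mem_e_LCS; lia.
have LCS_k0 : LCS br k = <<[::]>>%VS.
  have [Ek|k_ge2] := eqVneq k 1%N; first by lia.
  by rewrite IH ?lcs_span0 ?span_nil //; lia.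
rewrite lcs_span0 1?LCS_succ; try lia.
apply/eqP; rewrite -subv0 -(span_nil V).
apply: (@brS_subv _ _ _ lie _ _ [::] (vbasis fullv)).
  by rewrite LCS_k0.
by rewrite (span_basis (vbasisP _)).
Qed.

Lemma brS_LCS_subv k l (U : {vspace V}) : (2 <= k)%N -> (2 <= l)%N ->
  (forall i j, (2 <= i <= n - k + 1)%N -> (2 <= j <= n - l + 1)%N ->
     br (e i) (e j) \in U) ->
  (brS br (LCS br k) (LCS br l) <= U)%VS.
Proof.
move=> k_ge2 l_ge2 brU; rewrite !LCS_lcs_span //.
apply: subv_trans (brS_subv lie (subvv _) (subvv _)) _.
apply/span_subvP => _ /allpairsP[[a b] /= [/mapP[i Hi ->] /mapP[j Hj ->] ->]].
by move: Hi Hj; rewrite !mem_iota => Hi Hj; apply: brU; lia.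
Qed.

Lemma dim_LCS_ge2 k : (2 <= k)%N -> \dim (LCS br k) = (n - k)%N.
Proof. by move=> k_ge2; rewrite LCS_lcs_span // dim_lcs_span //; lia. Qed.

Lemma dim_brS_LCS_ge2 k l : (2 <= k)%N -> (2 <= l)%N ->
  \dim (brS br (LCS br k) (LCS br l)) = (if (k + l <= 5)%N then 1 else 0)%N.
Proof.
move=> k_ge2 l_ge2; case: ifP => kl_le5; last first.
  apply/eqP; rewrite dimv_eq0 -subv0; apply: brS_LCS_subv => // i j Hi Hj.
  by rewrite br_e_eq0 ?mem0v //; lia.
set a := br (e (n - 2)%N) (e (n - 1)%N).
suff -> : brS br (LCS br k) (LCS br l) = <[a]>%VS by rewrite dim_vline z2_eq.
apply: subv_anti; apply/andP; split.
  apply: brS_LCS_subv => // i j Hi Hj.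
  have [le_ij|gt_ij] := leqP (i + j) (2 * n - 4).
    by rewrite br_e_eq0 ?mem0v //; lia.
  have : (i = n - 2 /\ j = n - 1 \/ i = n - 1 /\ j = n - 2 \/ i = j)%N by lia.
  case=> [[-> ->]|[[-> ->]|->]]; first exact: memv_line.
    by rewrite (br_anti lie) memvN memv_line.
  by rewrite (brxx lie) mem0v.
apply/subvP => _ /vlineP[c ->]; apply: memvZ.
have [->|l_ge3] := eqVneq l 2%N.
  by apply: (mem_brS lie); apply: mem_e_LCS; lia.
by rewrite /a (br_anti lie) memvN; apply: (mem_brS lie); apply: mem_e_LCS; lia.
Qed.

Definition hp_coef k l : nat :=
  if k == 1%N then (n - l - 1)%N
  else if l == 1%N then (n - k - 1)%N
  else if (k + l <= 5)%N then 1%N else 0%N.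

Lemma dim_brS_LCS k l : (1 <= k)%N -> (1 <= l)%N ->
  \dim (brS br (LCS br k) (LCS br l)) = hp_coef k l.
Proof.
move=> k_ge1 l_ge1; rewrite /hp_coef.
have [->|k_ge2] := eqVneq k 1%N.
  by rewrite (brSC lie) -LCS_succ // dim_LCS_ge2 //; lia.
have [->|l_ge2] := eqVneq l 1%N.
  by rewrite -LCS_succ // dim_LCS_ge2 //; lia.
by apply: dim_brS_LCS_ge2; lia.
Qed.

End AdaptedBasis.

Lemma sum_codim_trunc n (G : nat -> {poly {poly int}}) : (3 <= n)%N ->
  \sum_(2 <= k < n.+1) (n - k - 1)%:R * G k =
  \sum_(2 <= k < n - 1) (n - k - 1)%:R * G k.
Proof.
move=> n_ge3; rewrite (big_cat_nat _ (n := (n - 1)%N)) //=; try lia.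
rewrite [X in _ + X]big1_seq ?addr0 // => k; rewrite mem_index_iota => Hk.
have -> : (n - k - 1 = 0)%N by lia.
by rewrite mul0r.
Qed.

Lemma sum_low_degree n : (4 <= n)%N ->
  \sum_(2 <= k < n.+1) \sum_(2 <= l < n.+1)
     (if (k + l <= 5)%N then 1%N else 0%N)%:R * tm k l
  = tm 2 2 + tm 2 3 + tm 3 2 :> {poly {poly int}}.
Proof.
move=> n_ge4.
have high k m : (6 <= k + m)%N -> \sum_(m <= l < n.+1)
    (if (k + l <= 5)%N then 1%N else 0%N)%:R * tm k l = 0 :> {poly {poly int}}.
  move=> km_ge6; apply: big1_seq => l; rewrite mem_index_iota => Hl.
  by case: ifP => [|_]; [lia | rewrite mul0r].
rewrite big_ltn; last by lia.
rewrite big_ltn; last by lia.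
rewrite [X in _ + (_ + X)]big1_seq => [|k]; last first.
  by rewrite mem_index_iota => Hk; apply: high; lia.
rewrite big_ltn; last by lia.
rewrite big_ltn; last by lia.
rewrite (high 2%N 4%N) // big_ltn; last by lia.
by rewrite (high 3%N 3%N) // /= !mulr1n !mul1r !addr0.
Qed.

Lemma sum_hp_coef n : (6 <= n)%N ->
  \sum_(1 <= k < n.+1) \sum_(1 <= l < n.+1) (hp_coef n k l)%:R * tm k l
  = HP0 n + tm 2 3 + tm 3 2 + tm 2 2.
Proof.
move=> n_ge6.
have row1 : \sum_(1 <= l < n.+1) (hp_coef n 1 l)%:R * tm 1 l =
    (n - 2)%:R * tm 1 1 + \sum_(2 <= k < n - 1) (n - k - 1)%:R * tm 1 k.
  rewrite big_ltn -?sum_codim_trunc; try lia.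
  by rewrite /hp_coef /=; have -> : (n - 1 - 1 = n - 2)%N by lia.
have rows : \sum_(2 <= k < n.+1) \sum_(1 <= l < n.+1) (hp_coef n k l)%:R * tm k l =
    \sum_(2 <= k < n - 1) (n - k - 1)%:R * tm k 1 + (tm 2 2 + tm 2 3 + tm 3 2).
  rewrite -(sum_codim_trunc n) -?(sum_low_degree n) -?big_split; try lia.
  apply: eq_big_nat => k Hk; have /negPf k_ne1 : k != 1%N by lia.
  rewrite big_ltn /hp_coef ?k_ne1 ?eqxx; last by lia.
  congr (_ + _); apply: eq_big_nat => l Hl.
  by have /negPf -> : l != 1%N by lia.
rewrite big_ltn; last by lia.
rewrite row1 rows /HP0.
under [X in _ = _ + X + _ + _ + _]eq_bigr do rewrite mulrDr.
rewrite big_split /=; ring.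
Qed.

Theorem mainTheorem11 (R : realType) (n : nat) (V : vectType R[i])
    (br : V -> V -> V) :
  is_lie br -> (6 <= n)%N -> assoc_triple br (n - 2) (n - 2) n ->
  HP br = HP0 n + tm 2 3 + tm 3 2 + tm 2 2.
Proof.
move=> lie n_ge6 [[_ dim_LCS] _ dimV [e [[basis_e br_e1 br_e2 br_e3] z1 z2]]].
rewrite /is_basis dimV in dim_LCS basis_e br_e1 br_e2 br_e3.
have z1_eq k : (4 <= k < n - 2)%N -> br (e k) (e n) = 0.
  case: z1 => _ _ z1_min /z1_min; rewrite dimV.
  by case: (br (e k) (e n) =P 0).
have z2_eq : br (e (n - 2)%N) (e (n - 1)%N) != 0.
  by case: z2 => _ /eqP; have -> : (n - 1 = (n - 2).+1)%N by lia.
rewrite /HP dimV -sum_hp_coef //.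
apply: eq_big_nat => k Hk; apply: eq_big_nat => l Hl.
by rewrite (dim_brS_LCS lie _ _ n_ge6 basis_e dim_LCS br_e1 br_e2 br_e3 z1_eq z2_eq) //; lia.
Qed.
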